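(* Let $P$ be a finite poset and fix a real number $q\geq 0$. For $p\in P$ let $T_p^q\colon \mathcal{J}(P)\to\mathbb{R}$ be the statistic $T_p^q\coloneqq T_p^+-q\,T_p^-$. Then the statistics $T_p^q$ ($p\in P$) are linearly independent over $\mathbb{R}$, and they are also linearly independent from the constant function $1$ (i.e., $1\notin\operatorname{span}_{\mathbb{R}}\{T_p^q\colon p\in P\}$).
   Context: $\mathcal{J}(P)$ denotes the set of order ideals (downward-closed subsets) of $P$. For $p\in P$ and $I\in\mathcal{J}(P)$: $T_p^+(I)=1$ if $p$ is a minimal element of $P\setminus I$ and $0$ otherwise; $T_p^-(I)=1$ if $p$ is a maximal element of $I$ and $0$ otherwise. *)

From HB Require Import structures.
From mathcomp Require Import all_boot all_order all_algebra.
From mathcomp Require Import reals.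
Set Implicit Arguments. Unset Strict Implicit. Unset Printing Implicit Defensive.
Import Order.TTheory GRing.Theory Num.Theory.
Local Open Scope order_scope.

Definition is_ideal (d : Order.disp_t) (P : finPOrderType d) (I : {set P}) : bool :=
  [forall x : P, forall y : P, ((y \in I) && (x <= y)) ==> (x \in I)].

Definition Tplus (d : Order.disp_t) (P : finPOrderType d) (p : P) (I : {set P}) : bool :=
  (p \notin I) && [forall x : P, (x \notin I) ==> ~~ (x < p)].

Definition Tminus (d : Order.disp_t) (P : finPOrderType d) (p : P) (I : {set P}) : bool :=
  (p \in I) && [forall x : P, (x \in I) ==> ~~ (p < x)].

Definition Tq (R : realType) (d : Order.disp_t) (P : finPOrderType d) (q : R) (p : P)
  (I : {set P}) : R :=
  ((Tplus p I)%:R - q * (Tminus p I)%:R)%R.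

From HB Require Import structures.
From mathcomp Require Import all_boot all_order all_algebra.
From mathcomp Require Import reals.
Set Implicit Arguments. Unset Strict Implicit. Unset Printing Implicit Defensive.
Import Order.TTheory GRing.Theory Num.Theory.
Local Open Scope ring_scope.

(* Integrate a relation sum_p c_p T_p^q = k against the product weight
   w(I) = prod_{x in I} a_x * prod_{x notin I} b_x over the ideals of P.
   Adding p to an ideal I having p minimal in its complement is a bijection
   onto the ideals having p maximal, so the integral of T_p^q equals
   (b_p - q a_p) times a sum of positive terms.  Taking a = 1, b = q makes
   every T_p^q integrate to 0 while 1 integrates to a positive number; taking
   a = 1, b = q + [x = p0] isolates the coefficient c_p0.  This b needs q > 0
   to be positive; for q = 0 it suffices to evaluate at the ideal of elements
   not above p0, where T_p^+ is the indicator of p = p0. *)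

Section Ideals.
Variables (d : Order.disp_t) (P : finPOrderType d).
Implicit Types (p x y : P) (I J : {set P}).

Lemma idealP I : reflect (forall x y, y \in I -> (x <= y)%O -> x \in I) (is_ideal I).
Proof.
apply: (iffP forallP) => [idI x y yI le_xy | idI x].
  by move/forallP: (idI x) => /(_ y); rewrite yI le_xy.
by apply/forallP => y; apply/implyP => /andP[]; apply: idI.
Qed.

Lemma TplusP p I :
  reflect (p \notin I /\ forall x, x \notin I -> ~~ (x < p)%O) (Tplus p I).
Proof.
apply: (iffP andP) => -[pI minp]; split=> //.
  by move=> x xI; move/forallP/(_ x)/implyP: minp; apply.
by apply/forallP => x; apply/implyP/minp.
Qed.

Lemma TminusP p I :
  reflect (p \in I /\ forall x, x \in I -> ~~ (p < x)%O) (Tminus p I).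
Proof.
apply: (iffP andP) => -[pI maxp]; split=> //.
  by move=> x xI; move/forallP/(_ x)/implyP: maxp; apply.
by apply/forallP => x; apply/implyP/maxp.
Qed.

Lemma setT_ideal : is_ideal [set: P].
Proof. by apply/idealP => x y; rewrite !inE. Qed.

Lemma ideal_Tminus_setU1 p I : p \notin I ->
  (is_ideal (p |: I) && Tminus p (p |: I)) = (is_ideal I && Tplus p I).
Proof.
move=> pI; apply/andP/andP => -[/idealP idJ].
- case/TminusP => _ maxp; split.
    apply/idealP => x y yI le_xy.
    have: x \in p |: I by apply: (idJ x y); rewrite // in_setU1 yI orbT.
    rewrite in_setU1 => /predU1P[xp | //]; subst x.
    have := maxp y; rewrite in_setU1 yI orbT lt_neqAle le_xy andbT negbK.
    by move=> /(_ isT) /eqP py; rewrite py yI in pI.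
  apply/TplusP; split=> // x xI; apply/negP => lt_xp.
  have: x \in p |: I by apply: (idJ x p); rewrite ?setU11 ?ltW.
  by rewrite in_setU1 (negbTE xI) orbF => /eqP xp; rewrite xp ltxx in lt_xp.
- case/TplusP => _ minp; split.
    apply/idealP => x y; rewrite !in_setU1 => /predU1P[-> | yI] le_xy.
      move: le_xy; rewrite le_eqVlt => /predU1P[-> | lt_xp]; first by rewrite eqxx.
      by apply/predU1P; right; apply: contraT => /minp; rewrite lt_xp.
    by rewrite (idJ x y yI le_xy) orbT.
  apply/TminusP; split=> [|x]; first exact: setU11.
  rewrite in_setU1 => /predU1P[-> | xI]; first by rewrite ltxx.
  by apply: contra pI => /ltW /(idJ p x xI).
Qed.

Lemma big_Tminus (V : nmodType) p (F : {set P} -> V) :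
  \sum_(J | is_ideal J && Tminus p J) F J =
  \sum_(I | is_ideal I && Tplus p I) F (p |: I).
Proof.
rewrite (reindex_onto (fun I => p |: I) (fun J => J :\ p)) => [|J /andP[_]].
  apply: eq_bigl => I; have [pI | pI] := boolP (p \in I).
    have /negbTE -> : ~~ Tplus p I by apply/TplusP => -[]; rewrite pI.
    rewrite andbF; apply/negbTE/negP => /andP[_ /eqP DpI].
    by move: pI; rewrite -DpI setD11.
  by rewrite ideal_Tminus_setU1 // setU1K // eqxx andbT.
by case/TminusP => pJ _; apply: setD1K.
Qed.

Definition not_above (p0 : P) : {set P} := ~: [set x | (p0 <= x)%O].

Lemma not_above_ideal p0 : is_ideal (not_above p0).
Proof.
apply/idealP => x y; rewrite !inE => yI le_xy.
by apply: contra yI => /le_trans; apply.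
Qed.

Lemma Tplus_not_above p0 p : Tplus p (not_above p0) = (p == p0).
Proof.
apply/TplusP/eqP => [[] | ->].
  rewrite !inE negbK => le_p0p /(_ p0); rewrite !inE lexx lt_neqAle le_p0p.
  by rewrite andbT !negbK => /(_ isT) /eqP.
split=> [|x]; first by rewrite !inE lexx.
by rewrite !inE negbK => le_p0x; rewrite (le_gtF le_p0x).
Qed.

Lemma Tplus_free (R : pzRingType) (c : P -> R) :
  (forall I, is_ideal I -> \sum_p c p * (Tplus p I)%:R = 0) -> forall p, c p = 0.
Proof.
move=> span0 p0; have := span0 _ (not_above_ideal p0).
rewrite (bigD1 p0) //= big1 => [|p /negbTE p_p0]; last first.
  by rewrite Tplus_not_above p_p0 mulr0.
by rewrite Tplus_not_above eqxx mulr1 addr0.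
Qed.

End Ideals.

Section Weights.
Variables (R : realType) (d : Order.disp_t) (P : finPOrderType d).
Implicit Types (a b c : P -> R) (p x : P) (I : {set P}).

Definition weight a b I : R := \prod_x (if x \in I then a x else b x).

Definition weight_but p a b I : R :=
  \prod_(x | x != p) (if x \in I then a x else b x).

Lemma weight_bigD1 p a b I :
  weight a b I = (if p \in I then a p else b p) * weight_but p a b I.
Proof. exact: bigD1. Qed.

Lemma weight_but_setU1 p a b I : weight_but p a b (p |: I) = weight_but p a b I.
Proof. by apply: eq_bigr => x xp; rewrite in_setU1 (negbTE xp). Qed.

Lemma sum_weight_Tq q a b p :
  \sum_(I | is_ideal I) weight a b I * Tq q p I =
  (b p - q * a p) * \sum_(I | is_ideal I && Tplus p I) weight_but p a b I.
Proof.
under eq_bigr do rewrite /Tq mulrBr mulrCA !mulr_natr !mulrb.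
rewrite sumrB -mulr_sumr -!big_mkcondr big_Tminus mulr_sumr mulr_sumr -sumrB.
apply: eq_bigr => I /andP[_ /TplusP[pI _]].
rewrite !(weight_bigD1 p) weight_but_setU1 setU11 (negbTE pI).
by rewrite mulrA -mulrBl.
Qed.

Lemma sum_weight_span q c k a b :
  (forall I, is_ideal I -> \sum_p c p * Tq q p I = k) ->
  \sum_(I | is_ideal I) weight a b I * k =
  \sum_p c p * ((b p - q * a p) *
                \sum_(I | is_ideal I && Tplus p I) weight_but p a b I).
Proof.
move=> span_k.
transitivity (\sum_(I | is_ideal I) \sum_p c p * (weight a b I * Tq q p I)).
  apply: eq_bigr => I /span_k <-; rewrite mulr_sumr.
  by apply: eq_bigr => p _; rewrite mulrCA.
by rewrite exchange_big; apply: eq_bigr => p _; rewrite -mulr_sumr sum_weight_Tq.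
Qed.

Lemma sum_weight_but_gt0 p a b :
  (forall x, 0 < a x) -> (forall x, 0 < b x) ->
  0 < \sum_(I | is_ideal I && Tplus p I) weight_but p a b I.
Proof.
move=> a_gt0 b_gt0.
have w_gt0 I : 0 < weight_but p a b I by apply: prodr_gt0 => x _; case: ifP.
rewrite (bigD1 (not_above p)) ?not_above_ideal ?Tplus_not_above ?eqxx //=.
by apply: ltr_wpDr (w_gt0 _); apply: sumr_ge0 => I _; apply: ltW.
Qed.

Lemma sum_weight_ge1 b : (forall x, 0 <= b x) ->
  1 <= \sum_(I | is_ideal I) weight (fun=> 1) b I.
Proof.
move=> b_ge0; rewrite (bigD1 setT) ?setT_ideal //=.
have -> : weight (fun=> 1) b setT = 1 by apply: big1 => x _; rewrite inE.
by apply: ler_wpDr => //; apply: sumr_ge0 => I _; apply: prodr_ge0 => x _; case: ifP.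
Qed.

Lemma Tq_free q : 0 < q -> forall c,
  (forall I, is_ideal I -> \sum_p c p * Tq q p I = 0) -> forall p, c p = 0.
Proof.
move=> q_gt0 c span0 p0.
pose b x : R := q + (x == p0)%:R.
have := sum_weight_span (fun=> 1) b span0.
rewrite big1 => [|I _]; last by rewrite mulr0.
have b_gt0 x : 0 < b x by apply: ltr_wpDr.
rewrite (bigD1 p0) //= [X in _ + X]big1 => [|p /negbTE p_p0]; last first.
  by rewrite /b p_p0 mulr1 addr0 subrr mul0r mulr0.
rewrite /b eqxx mulr1 addrAC subrr add0r mul1r addr0 => /esym /eqP.
by rewrite mulf_eq0 (gt_eqF (sum_weight_but_gt0 _ _ b_gt0)) // orbF => /eqP.
Qed.

Lemma one_notin_span_Tq q : 0 <= q ->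
  ~ exists c, forall I, is_ideal I -> \sum_p c p * Tq q p I = 1.
Proof.
move=> q_ge0 [c span1].
have := sum_weight_span (fun=> 1) (fun=> q) span1.
rewrite [RHS]big1 => [|p _]; last by rewrite mulr1 subrr mul0r mulr0.
under eq_bigr do rewrite mulr1.
by move=> sum0; have := sum_weight_ge1 (fun=> q_ge0); rewrite sum0 ler10.
Qed.

End Weights.

Theorem theorem2p7 (R : realType) (d : Order.disp_t) (P : finPOrderType d)
  (q : R) (hq : 0 <= q) :
  (* linear independence of the T_p^q as functions on J(P) *)
  (forall c : P -> R,
     (forall I : {set P}, is_ideal I -> \sum_(p : P) c p * Tq q p I = 0) ->
     forall p : P, c p = 0) /\
  (* the constant function 1 is not in their span *)
  ~ (exists c : P -> R,
       forall I : {set P}, is_ideal I -> \sum_(p : P) c p * Tq q p I = 1).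
Proof.
split; last exact: one_notin_span_Tq.
have [-> c span0 | q_gt0] := eqVneq q 0; last by apply: Tq_free; rewrite lt_def q_gt0.
by apply: Tplus_free => I /span0; under eq_bigr do rewrite /Tq mul0r subr0.
Qed.
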